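(* Let $Q$ be a nonrecursive connected query and let $a$ be the maximum radius of a rule of $\Pi_Q$. For every dataset $D'$, predicate $P$, tuple of objects $\vec o$, time point $\tau$, and finite set $\mathbf T$ of time points containing $\tau$ and every time point occurring in $\Pi_Q$: if $\Pi_Q\cup D'\models P(\vec o,\tau)$, then $\Pi_Q\cup D'[\min(\mathbf T)-a\cdot\mathrm{rank}(P)-1]\models P(\vec o,\tau)$.
   Context: Temporal Datalog. Constants are partitioned into objects and integer time points; variables into object variables and time variables. A time term is a time point, a time variable, or an expression $t+k$ with $t$ a time variable and $k\in\mathbb{Z}$. Each predicate is either extensional (EDB) or intensional (IDB) and has an arity $n\ge0$, each position being of object sort or time sort; a predicate is rigid if all its positions are of object sort, and temporal if its last position is of time sort and all others are of object sort. An atom $P(t_1,\dots,t_n)$ has terms of the required sorts. A rule is $\bigwedge_i\alpha_i\to\alpha$ with $\alpha$ and all $\alpha_i$ rigid or temporal atoms, $\alpha$ IDB whenever the body is nonempty, and every head variable occurring in the body. A program is a finite set of rules. A fact is a ground rigid or temporal atom without $+$ (identified with the rule $\top\to\alpha$); a dataset is a finite set of EDB facts. Rules are read as universally quantified first-order sentences with $+$ interpreted as integer addition; $\Pi\models\alpha$ denotes entailment. A query is $Q=\langle P_Q,\Pi_Q\rangle$ with $\Pi_Q$ a program and $P_Q$ an IDB predicate of $\Pi_Q$. For a dataset $D$ and time point $\tau$, $D[\tau]$ is the set of all rigid facts of $D$ together with the temporal facts of $D$ whose time argument is $>\tau$. Predicate $P$ depends on $P'$ in $\Pi$ if some rule of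 $\Pi$ has $P$ in the head and $P'$ in the body; $\Pi$ (or a query with program $\Pi$) is nonrecursive if the graph of this dependency relation is acyclic. $\mathrm{rank}(P)=\mathrm{rank}(P,\Pi_Q)$ is $0$ if $P$ does not occur in a rule head of $\Pi_Q$, and otherwise the maximum of $\mathrm{rank}(P')+1$ over predicates $P'$ on which $P$ depends. A rule is connected if it contains at most one time variable and, if a time variable occurs in the body, it also occurs in the head; a query is connected if all its rules are. For a time term $s$, $\Delta(s)=k$ if $s=t+k$ with $t$ a variable, and $\Delta(s)=0$ otherwise. The radius of a connected rule $r$ mentioning a time variable is the maximum of $|\Delta(s)-\Delta(s')|$ where $s$ is the time argument of the head and $s'$ the time argument of a body atom of $r$. *)

From Stdlib Require Import ZArith List Bool Relations.
Import ListNotations.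
Open Scope Z_scope.

(* A predicate: a name, the number of its object positions, whether it is
   temporal (an extra last position of time sort) or rigid (no time
   position), and whether it is IDB (true) or EDB (false).  Only rigid and
   temporal predicates can occur in atoms of rules/facts, so only these are
   modelled. *)
Record Pred := mkPred { pname : nat; parity : nat; ptemporal : bool; pidb : bool }.

Definition Pred_eq_dec (p q : Pred) : {p = q} + {p <> q}.
Proof. decide equality; try apply Bool.bool_dec; apply Nat.eq_dec. Defined.

Inductive OTerm := OConst (o : nat) | OVar (x : nat).
Inductive TTerm := TConst (z : Z) | TVar (t : nat) | TPlus (t : nat) (k : Z).

Record Atom := mkAtom { apred : Pred; aobjs : list OTerm; atime : option TTerm }.

Definition atom_wf (a : Atom) : Prop :=
  length (aobjs a) = parity (apred a) /\
  (ptemporal (apred a) = true <-> atime a <> None).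

Record Rule := mkRule { rbody : list Atom; rhead : Atom }.
Definition Program := list Rule.

Definition atom_ovars (a : Atom) : list nat :=
  flat_map (fun o => match o with OVar x => [x] | OConst _ => [] end) (aobjs a).
Definition atom_tvars (a : Atom) : list nat :=
  match atime a with Some (TVar t) | Some (TPlus t _) => [t] | _ => [] end.
Definition atom_tconsts (a : Atom) : list Z :=
  match atime a with Some (TConst z) => [z] | _ => [] end.

Definition rule_wf (r : Rule) : Prop :=
  Forall atom_wf (rhead r :: rbody r) /\
  (rbody r <> [] -> pidb (apred (rhead r)) = true) /\
  (forall x, In x (atom_ovars (rhead r)) ->
     exists b, In b (rbody r) /\ In x (atom_ovars b)) /\
  (forall t, In t (atom_tvars (rhead r)) ->
     exists b, In b (rbody r) /\ In t (atom_tvars b)).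

Definition program_wf (Pi : Program) : Prop := Forall rule_wf Pi.

Record GAtom := mkGAtom { gpred : Pred; gobjs : list nat; gtime : option Z }.

Definition gatom_wf (f : GAtom) : Prop :=
  length (gobjs f) = parity (gpred f) /\
  (ptemporal (gpred f) = true <-> gtime f <> None).

Definition dataset (D : list GAtom) : Prop :=
  forall f, In f D -> gatom_wf f /\ pidb (gpred f) = false.

Definition restrict (D : list GAtom) (tau : Z) : list GAtom :=
  filter (fun f => match gtime f with None => true | Some t => Z.ltb tau t end) D.

Definition Interp := GAtom -> Prop.

Definition eval_o (vo : nat -> nat) (s : OTerm) : nat :=
  match s with OConst o => o | OVar x => vo x end.
Definition eval_t (vt : nat -> Z) (s : TTerm) : Z :=
  match s with TConst z => z | TVar t => vt t | TPlus t k => vt t + k end.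

Definition ground (vo : nat -> nat) (vt : nat -> Z) (a : Atom) : GAtom :=
  mkGAtom (apred a) (map (eval_o vo) (aobjs a)) (option_map (eval_t vt) (atime a)).

Definition sat_rule (I : Interp) (r : Rule) : Prop :=
  forall vo vt, (forall b, In b (rbody r) -> I (ground vo vt b)) ->
                I (ground vo vt (rhead r)).

Definition model (Pi : Program) (I : Interp) : Prop :=
  forall r, In r Pi -> sat_rule I r.

Definition entails (Pi : Program) (D : list GAtom) (alpha : GAtom) : Prop :=
  forall I : Interp, model Pi I -> (forall f, In f D -> I f) -> I alpha.

Definition occurs_in (Pi : Program) (P : Pred) : Prop :=
  exists r a, In r Pi /\ In a (rhead r :: rbody r) /\ apred a = P.

Record Query := mkQuery { qpred : Pred; qprog : Program }.

Definition query_wf (Q : Query) : Prop :=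
  program_wf (qprog Q) /\ pidb (qpred Q) = true /\ occurs_in (qprog Q) (qpred Q).

Definition depends (Pi : Program) (P P' : Pred) : Prop :=
  exists r, In r Pi /\ apred (rhead r) = P /\
    exists b, In b (rbody r) /\ apred b = P'.

Definition nonrecursive (Pi : Program) : Prop :=
  forall P, ~ clos_trans Pred (depends Pi) P P.

(* rank with fuel; for nonrecursive programs fuel = length Pi suffices *)
Fixpoint rank_fuel (Pi : Program) (n : nat) (P : Pred) : nat :=
  match n with
  | O => O
  | S n' =>
      fold_right Nat.max O
        (flat_map (fun r => if Pred_eq_dec (apred (rhead r)) P
                            then map (fun b => S (rank_fuel Pi n' (apred b))) (rbody r)
                            else []) Pi)
  end.

Definition rank (Pi : Program) (P : Pred) : nat := rank_fuel Pi (length Pi) P.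

Definition rule_tvars (r : Rule) : list nat := flat_map atom_tvars (rhead r :: rbody r).

Definition connected_rule (r : Rule) : Prop :=
  (forall t1 t2, In t1 (rule_tvars r) -> In t2 (rule_tvars r) -> t1 = t2) /\
  (forall t, In t (flat_map atom_tvars (rbody r)) -> In t (atom_tvars (rhead r))).

Definition connected_query (Q : Query) : Prop :=
  forall r, In r (qprog Q) -> connected_rule r.

Definition delta (s : TTerm) : Z :=
  match s with TPlus _ k => k | _ => 0 end.

Definition radius (r : Rule) : Z :=
  match atime (rhead r) with
  | Some s => fold_right Z.max 0
      (map (fun b => match atime b with
                     | Some s' => Z.abs (delta s - delta s')
                     | None => 0 end) (rbody r))
  | None => 0
  end.

Definition mentions_tvar (r : Rule) : bool :=
  match rule_tvars r with [] => false | _ => true end.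

Definition max_radius (Pi : Program) : Z :=
  fold_right Z.max 0 (map radius (filter mentions_tvar Pi)).

Definition prog_tconsts (Pi : Program) : list Z :=
  flat_map (fun r => flat_map atom_tconsts (rhead r :: rbody r)) Pi.

(* The data below min(T) - a * rank(P) is irrelevant because each rule
   application lowers time by at most the radius a, unless the body time is a
   constant of the program (hence >= min(T)), and derivations of P have depth at
   most rank(P).  Semantically: "g is entailed by the data after L - 1 whenever
   L + a * rank(g) is at most min(T) and at most the time of g" defines a model
   of the program containing the data, so it holds of every entailed fact. *)
From Stdlib Require Import ZArith List Lia Relations Classical.
Import ListNotations.
Open Scope Z_scope.

Lemma in_le_list_max (l : list nat) (x : nat) : In x l -> (x <= list_max l)%nat.
Proof.
  intros Hx. assert (Hall := proj1 (list_max_le l (list_max l)) (le_n _)).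
  exact (proj1 (Forall_forall _ l) Hall x Hx).
Qed.

Lemma in_le_fold_right_Zmax (l : list Z) (x : Z) : In x l -> x <= fold_right Z.max 0 l.
Proof. induction l as [|y l IH]; simpl; [tauto|]. intros [->|Hx]; [|specialize (IH Hx)]; lia. Qed.

Lemma fold_right_Zmax_nonneg (l : list Z) : 0 <= fold_right Z.max 0 l.
Proof. induction l; simpl; lia. Qed.

Section Rank.
Variable Pi : Program.

Lemma rank_fuel_S (n : nat) (P : Pred) :
  rank_fuel Pi (S n) P =
  list_max (flat_map (fun r => if Pred_eq_dec (apred (rhead r)) P
                               then map (fun b => S (rank_fuel Pi n (apred b))) (rbody r)
                               else []) Pi).
Proof. reflexivity. Qed.

Lemma rank_fuel_S_congr (n : nat) (P : Pred) :
  (forall Q, depends Pi P Q -> rank_fuel Pi (S n) Q = rank_fuel Pi n Q) ->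
  rank_fuel Pi (S (S n)) P = rank_fuel Pi (S n) P.
Proof.
  intros Hstable. rewrite !(rank_fuel_S _ P), !flat_map_concat_map.
  do 2 f_equal. apply map_ext_in. intros r Hr.
  destruct (Pred_eq_dec (apred (rhead r)) P) as [Hhead|]; [|reflexivity].
  apply map_ext_in. intros b Hb. f_equal. apply Hstable. exists r; eauto.
Qed.

Fixpoint dep_walk (l : list Pred) (Z : Pred) : Prop :=
  match l with
  | [] => True
  | P :: l' => depends Pi P (hd Z l') /\ dep_walk l' Z
  end.

Lemma rank_fuel_unstable_walk (n : nat) (P : Pred) :
  rank_fuel Pi (S n) P <> rank_fuel Pi n P ->
  exists l Z, length l = n /\ dep_walk (P :: l) Z.
Proof.
  revert P; induction n as [|n IH]; intros P Hunstable.
  - rewrite rank_fuel_S in Hunstable.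
    destruct (flat_map _ Pi) as [|x xs] eqn:E; [contradiction|].
    assert (Hx : In x (x :: xs)) by now left. rewrite <- E in Hx.
    apply in_flat_map in Hx as [r [Hr Hx]].
    destruct (Pred_eq_dec (apred (rhead r)) P) as [Hhead|]; [|contradiction].
    apply in_map_iff in Hx as [b [_ Hb]].
    exists [], (apred b). split; [reflexivity|]. split; [|exact I]. exists r; eauto.
  - destruct (classic (exists Q, depends Pi P Q /\ rank_fuel Pi (S n) Q <> rank_fuel Pi n Q))
      as [[Q [HPQ HQ]] | Hstable].
    + destruct (IH Q HQ) as [l [Z [Hl Hwalk]]].
      exists (Q :: l), Z. split; [simpl; lia|]. split; assumption.
    + exfalso. apply Hunstable, rank_fuel_S_congr. intros Q HPQ.
      destruct (Nat.eq_dec (rank_fuel Pi (S n) Q) (rank_fuel Pi n Q)); [assumption|].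
      exfalso. apply Hstable. eauto.
Qed.

Lemma dep_walk_clos_trans (l : list Pred) (P Z Q : Pred) :
  dep_walk (P :: l) Z -> In Q l -> clos_trans Pred (depends Pi) P Q.
Proof.
  revert P; induction l as [|P' l IH]; intros P [HPP' Hwalk] HQ; [contradiction|].
  destruct HQ as [<-|HQ].
  - now apply t_step.
  - apply t_trans with P'; [now apply t_step | now apply IH].
Qed.

Lemma dep_walk_NoDup (l : list Pred) (Z : Pred) :
  nonrecursive Pi -> dep_walk l Z -> NoDup l.
Proof.
  intros Hnr; induction l as [|P l IH]; intros Hwalk; constructor.
  - intros HP. apply (Hnr P). now apply (dep_walk_clos_trans l P Z).
  - apply IH, Hwalk.
Qed.

Lemma dep_walk_incl_heads (l : list Pred) (Z : Pred) :
  dep_walk l Z -> incl l (map (fun r => apred (rhead r)) Pi).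
Proof.
  induction l as [|P l IH]; intros Hwalk Q HQ; [contradiction|].
  destruct Hwalk as [[r [Hr [Hhead _]]] Hwalk]. destruct HQ as [<-|HQ].
  - apply in_map_iff; eauto.
  - now apply IH.
Qed.

(* An unstable step would give a walk through [length Pi + 1] heads of rules,
   pairwise distinct since [Pi] is nonrecursive. *)
Lemma rank_fuel_stable (P : Pred) :
  nonrecursive Pi -> rank_fuel Pi (S (length Pi)) P = rank Pi P.
Proof.
  intros Hnr. unfold rank.
  destruct (Nat.eq_dec (rank_fuel Pi (S (length Pi)) P) (rank_fuel Pi (length Pi) P))
    as [|Hunstable]; [assumption|].
  destruct (rank_fuel_unstable_walk _ _ Hunstable) as [l [Z [Hl Hwalk]]].
  pose proof (NoDup_incl_length (dep_walk_NoDup _ _ Hnr Hwalk) (dep_walk_incl_heads _ _ Hwalk))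
    as Hlen.
  rewrite length_map in Hlen. simpl in Hlen. lia.
Qed.

Lemma rank_body_lt (r : Rule) (b : Atom) :
  nonrecursive Pi -> In r Pi -> In b (rbody r) ->
  (rank Pi (apred b) < rank Pi (apred (rhead r)))%nat.
Proof.
  intros Hnr Hr Hb. rewrite <- (rank_fuel_stable (apred (rhead r)) Hnr), rank_fuel_S.
  apply in_le_list_max, in_flat_map. exists r. split; [assumption|].
  destruct (Pred_eq_dec (apred (rhead r)) (apred (rhead r))) as [_|]; [|congruence].
  apply in_map_iff. exists b. split; [reflexivity|assumption].
Qed.

End Rank.

Lemma eval_t_tvar (vt : nat -> Z) (a : Atom) (s : TTerm) (x : nat) :
  atime a = Some s -> In x (atom_tvars a) -> eval_t vt s = vt x + delta s.
Proof.
  unfold atom_tvars. intros ->.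
  destruct s; simpl; [tauto| |]; intros [<-|[]]; lia.
Qed.

Lemma max_radius_nonneg (Pi : Program) : 0 <= max_radius Pi.
Proof. apply fold_right_Zmax_nonneg. Qed.

Lemma radius_le_max_radius (Pi : Program) (r : Rule) :
  In r Pi -> mentions_tvar r = true -> radius r <= max_radius Pi.
Proof.
  intros Hr Hm. apply in_le_fold_right_Zmax, in_map, filter_In. auto.
Qed.

Lemma body_delta_le_max_radius (Pi : Program) (r : Rule) (b : Atom) (s s' : TTerm) (x : nat) :
  In r Pi -> atime (rhead r) = Some s -> In x (atom_tvars (rhead r)) ->
  In b (rbody r) -> atime b = Some s' ->
  Z.abs (delta s - delta s') <= max_radius Pi.
Proof.
  intros Hr Hs Hx Hb Hs'.
  apply Z.le_trans with (radius r).
  - unfold radius. rewrite Hs. apply in_le_fold_right_Zmax, in_map_iff.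
    exists b. rewrite Hs'. auto.
  - apply radius_le_max_radius; [assumption|].
    unfold mentions_tvar, rule_tvars. simpl. destruct (atom_tvars (rhead r)); [contradiction|].
    reflexivity.
Qed.

Lemma connected_body_time_ge (Pi : Program) (r : Rule) (b : Atom) (s' : TTerm) (x : nat)
  (vt : nat -> Z) :
  In r Pi -> connected_rule r -> In b (rbody r) -> atime b = Some s' ->
  In x (atom_tvars b) ->
  exists s, atime (rhead r) = Some s /\ eval_t vt s - max_radius Pi <= eval_t vt s'.
Proof.
  intros Hr [_ Hcon] Hb Hs' Hxb.
  assert (Hxh : In x (atom_tvars (rhead r))) by (apply Hcon, in_flat_map; eauto).
  destruct (atime (rhead r)) as [s|] eqn:Hs;
    [|unfold atom_tvars in Hxh; rewrite Hs in Hxh; contradiction].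
  exists s. split; [reflexivity|].
  pose proof (body_delta_le_max_radius Pi r b s s' x Hr Hs Hxh Hb Hs').
  rewrite (eval_t_tvar vt _ _ _ Hs Hxh), (eval_t_tvar vt _ _ _ Hs' Hxb). lia.
Qed.

Lemma connected_body_time_cases (Pi : Program) (r : Rule) (b : Atom) (s' : TTerm)
  (vt : nat -> Z) :
  In r Pi -> connected_rule r -> In b (rbody r) -> atime b = Some s' ->
  In (eval_t vt s') (prog_tconsts Pi) \/
  exists s, atime (rhead r) = Some s /\ eval_t vt s - max_radius Pi <= eval_t vt s'.
Proof.
  intros Hr Hcon Hb Hs'.
  destruct s' as [c|x|x k]; [left|right..].
  - apply in_flat_map. exists r. split; [assumption|].
    apply in_flat_map. exists b. split; [now right|].
    unfold atom_tconsts. rewrite Hs'. now left.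
  - apply (connected_body_time_ge Pi r b _ x); auto.
    unfold atom_tvars. rewrite Hs'. now left.
  - apply (connected_body_time_ge Pi r b _ x); auto.
    unfold atom_tvars. rewrite Hs'. now left.
Qed.

Section Cut.
Variables (Pi : Program) (D : list GAtom) (m : Z).
Hypothesis Hnr : nonrecursive Pi.
Hypothesis Hcon : forall r, In r Pi -> connected_rule r.
Hypothesis Hconsts : forall z, In z (prog_tconsts Pi) -> m <= z.

Definition slack (P : Pred) : Z := max_radius Pi * Z.of_nat (rank Pi P).

Lemma slack_nonneg (P : Pred) : 0 <= slack P.
Proof. apply Z.mul_nonneg_nonneg; [apply max_radius_nonneg | lia]. Qed.

Lemma slack_body (r : Rule) (b : Atom) :
  In r Pi -> In b (rbody r) -> slack (apred b) + max_radius Pi <= slack (apred (rhead r)).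
Proof.
  intros Hr Hb. unfold slack.
  assert (Hrank : Z.of_nat (rank Pi (apred b)) + 1 <= Z.of_nat (rank Pi (apred (rhead r))))
    by (pose proof (rank_body_lt Pi r b Hnr Hr Hb); lia).
  pose proof (Z.mul_le_mono_nonneg_l _ _ _ (max_radius_nonneg Pi) Hrank). lia.
Qed.

Definition safe_cut (L : Z) (g : GAtom) : Prop :=
  L + slack (gpred g) <= m /\ forall t, gtime g = Some t -> L + slack (gpred g) <= t.

Lemma safe_cut_body (L : Z) (r : Rule) (b : Atom) vo vt :
  In r Pi -> In b (rbody r) ->
  safe_cut L (ground vo vt (rhead r)) -> safe_cut L (ground vo vt b).
Proof.
  intros Hr Hb [Hm Htime].
  pose proof (slack_body r b Hr Hb). pose proof (max_radius_nonneg Pi).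
  split; simpl in *; [lia|]. intros t Ht.
  destruct (atime b) as [s'|] eqn:Hs'; [|discriminate]. injection Ht as <-.
  destruct (connected_body_time_cases Pi r b s' vt Hr (Hcon r Hr) Hb Hs')
    as [Hc | [s [Hs Hshift]]].
  - specialize (Hconsts _ Hc). lia.
  - rewrite Hs in Htime. specialize (Htime _ eq_refl). lia.
Qed.

Definition cut_entailed (g : GAtom) : Prop :=
  forall L, safe_cut L g -> entails Pi (restrict D (L - 1)) g.

Lemma cut_entailed_model : model Pi cut_entailed.
Proof.
  intros r Hr vo vt Hbody L Hcut I HI HD.
  apply (HI r Hr vo vt). intros b Hb.
  exact (Hbody b Hb L (safe_cut_body L r b vo vt Hr Hb Hcut) I HI HD).
Qed.

Lemma cut_entailed_data (f : GAtom) : In f D -> cut_entailed f.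
Proof.
  intros Hf L [_ Htime] I _ HD. apply HD, filter_In. split; [assumption|].
  destruct (gtime f) as [t|]; [|reflexivity].
  specialize (Htime t eq_refl). pose proof (slack_nonneg (gpred f)).
  apply Z.ltb_lt. lia.
Qed.

Theorem entails_restrict_safe_cut (g : GAtom) (L : Z) :
  entails Pi D g -> safe_cut L g -> entails Pi (restrict D (L - 1)) g.
Proof.
  intros Hent. exact (Hent cut_entailed cut_entailed_model cut_entailed_data L).
Qed.

End Cut.

Theorem mainTheorem10 (Q : Query) (D' : list GAtom) (P : Pred) (os : list nat)
  (tau : Z) (T : list Z) (tmin : Z) :
  query_wf Q -> nonrecursive (qprog Q) -> connected_query Q -> dataset D' ->
  ptemporal P = true -> length os = parity P ->
  In tau T -> (forall z, In z (prog_tconsts (qprog Q)) -> In z T) ->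
  In tmin T -> (forall z, In z T -> tmin <= z) ->
  entails (qprog Q) D' (mkGAtom P os (Some tau)) ->
  entails (qprog Q)
    (restrict D' (tmin - max_radius (qprog Q) * Z.of_nat (rank (qprog Q) P) - 1))
    (mkGAtom P os (Some tau)).
Proof.
  intros _ Hnr Hcon _ _ _ Htau HT _ Hmin Hent.
  apply (entails_restrict_safe_cut (qprog Q) D' tmin); auto.
  split; simpl; unfold slack.
  - lia.
  - intros t [= <-]. specialize (Hmin tau Htau). lia.
Qed.
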